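(* Let $(\mathbf{x}^1,y_l^1,y_r^1),\dots,(\mathbf{x}^T,y_l^T,y_r^T)$ be a sequence of examples with $\mathbf{x}^t\in\mathbb{R}^d$ and integers $1\le y_l^t\le y_r^t\le K$, and run the PA algorithm on it starting from $\mathbf{w}^1=\mathbf{0}$, $\boldsymbol\theta^1=\mathbf{0}$. Let $c=\min_{t\in[T]}(y_r^t-y_l^t)$, $R^2=\max_{t\in[T]}\Vert\mathbf{x}^t\Vert^2$, $D=1+R^2(K-c-1)$, and let $\mathbf{v}=(\mathbf{u},\mathbf{b})$ with $\mathbf{u}\in\mathbb{R}^d$, $\mathbf{b}\in\mathbb{R}^{K-1}$ be the parameters of an arbitrary predictor, $\Vert\mathbf{v}\Vert^2=\Vert\mathbf{u}\Vert^2+\Vert\mathbf{b}\Vert^2$. Then $$\sum_{t=1}^T\sum_{i=1}^{K-1}(l_i^t)^2\le D^2\left(\Vert\mathbf{v}\Vert+4(K-c-1)\sqrt{\sum_{t=1}^T\sum_{i=1}^{K-1}(l_i^{t*})^2}\right)^2 .$$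
   Context: PA algorithm: at trial $t$, with current $(\mathbf{w}^t,\boldsymbol\theta^t)\in\mathbb{R}^d\times\mathbb{R}^{K-1}$, the new parameters $(\mathbf{w}^{t+1},\boldsymbol\theta^{t+1})$ are the unique minimizer of $\tfrac12\Vert\mathbf{w}-\mathbf{w}^t\Vert^2+\tfrac12\Vert\boldsymbol\theta-\boldsymbol\theta^t\Vert^2$ subject to $\mathbf{w}\cdot\mathbf{x}^t-\theta_i\ge1$ for $i=1,\dots,y_l^t-1$ and $\mathbf{w}\cdot\mathbf{x}^t-\theta_i\le-1$ for $i=y_r^t,\dots,K-1$. Losses of the algorithm at trial $t$: $l_i^t=\max(0,1+\theta_i^t-\mathbf{w}^t\cdot\mathbf{x}^t)$ for $1\le i\le y_l^t-1$, $l_i^t=\max(0,1+\mathbf{w}^t\cdot\mathbf{x}^t-\theta_i^t)$ for $y_r^t\le i\le K-1$, and $l_i^t=0$ for $y_l^t\le i\le y_r^t-1$. Losses of the fixed predictor $(\mathbf{u},\mathbf{b})$: $l_i^{t*}=\max(0,1-\mathbf{u}\cdot\mathbf{x}^t+b_i)$ for $1\le i\le y_l^t-1$, $l_i^{t*}=\max(0,1+\mathbf{u}\cdot\mathbf{x}^t-b_i)$ for $y_r^t\le i\le K-1$, and $0$ otherwise. *)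

From mathcomp Require Import all_boot all_order all_algebra.
From mathcomp Require Import reals.
Set Implicit Arguments. Unset Strict Implicit. Unset Printing Implicit Defensive.
Import Order.TTheory GRing.Theory Num.Theory.
Local Open Scope ring_scope.

Section PA.
Variable R : realType.

Definition dotv (n : nat) (a b : 'rV[R]_n) : R := \sum_(j < n) a 0 j * b 0 j.
Definition sqnorm (n : nat) (a : 'rV[R]_n) : R := dotv a a.

(* Thresholds theta_1..theta_{K-1} are stored 0-based: theta_{i+1} = th 0 i,
   for i : 'I_(K-1). *)

Definition PA_feasible (d K : nat) (x : 'rV[R]_d) (yl yr : nat)
    (w : 'rV[R]_d) (th : 'rV[R]_(K - 1)) : Prop :=
  forall i : 'I_(K - 1),
    ((i.+1 < yl)%N -> 1 <= dotv w x - th 0 i) /\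
    ((yr <= i.+1)%N -> dotv w x - th 0 i <= -1).

Definition PA_objective (d K : nat) (wt : 'rV[R]_d) (tht : 'rV[R]_(K - 1))
    (w : 'rV[R]_d) (th : 'rV[R]_(K - 1)) : R :=
  2^-1 * sqnorm (w - wt) + 2^-1 * sqnorm (th - tht).

Definition PA_update (d K : nat) (x : 'rV[R]_d) (yl yr : nat)
    (wt : 'rV[R]_d) (tht : 'rV[R]_(K - 1))
    (w' : 'rV[R]_d) (th' : 'rV[R]_(K - 1)) : Prop :=
  PA_feasible x yl yr w' th' /\
  forall (w : 'rV[R]_d) (th : 'rV[R]_(K - 1)),
    PA_feasible x yl yr w th ->
    PA_objective wt tht w' th' <= PA_objective wt tht w th.

(* The same formula gives both the algorithm's loss l_i^t (with (w^t,theta^t))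
   and the fixed predictor's loss l_i^{t*} (with (u,b)). *)
Definition loss (d K : nat) (w : 'rV[R]_d) (th : 'rV[R]_(K - 1))
    (x : 'rV[R]_d) (yl yr : nat) (i : 'I_(K - 1)) : R :=
  if (i.+1 < yl)%N then Num.max 0 (1 + th 0 i - dotv w x)
  else if (yr <= i.+1)%N then Num.max 0 (1 + dotv w x - th 0 i)
  else 0.

End PA.

From mathcomp Require Import all_boot all_order all_algebra.
From mathcomp Require Import reals.
From mathcomp Require Import ring lra zify.
Set Implicit Arguments. Unset Strict Implicit. Unset Printing Implicit Defensive.
Import Order.TTheory GRing.Theory Num.Theory.
Local Open Scope ring_scope.

(* The PA update is the Euclidean projection of (w^t, theta^t) onto a convex
   polyhedron, so the step it makes has a nonnegative inner product with the
   direction to any feasible point.  Shifting every threshold of the comparator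
   (u, b) by its own loss makes it feasible; this yields the progress inequality
     S_t - 2 sqrt (S_t L_t) <= |z^t - v|^2 - |z^(t+1) - v|^2,
   where S_t is the squared step length and L_t the squared loss of v = (u, b).
   Telescoping and Cauchy-Schwarz give sqrt (sum S_t) <= |v| + 2 sqrt (sum L_t).
   Conversely, feasibility of the new point bounds every active loss of the
   old one by a coordinate of the step, and at most K - c - 1 constraints are
   active, whence sum_i (l_i^t)^2 <= D S_t. *)

Lemma cauchy_schwarz_sum (R : realDomainType) (I : finType) (P : pred I) (F G : I -> R) :
  (\sum_(i | P i) F i * G i) ^+ 2 <= (\sum_(i | P i) F i ^+ 2) * (\sum_(i | P i) G i ^+ 2).
Proof.
set A := \sum_(i | P i) F i ^+ 2; set B := \sum_(i | P i) G i ^+ 2.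
set C := \sum_(i | P i) F i * G i.
have lagrange :
    \sum_(i | P i) \sum_(j | P j) (F i * G j - F j * G i) ^+ 2 = 2 * (A * B - C ^+ 2).
  transitivity (\sum_(i | P i) \sum_(j | P j)
      (F i ^+ 2 * G j ^+ 2 + G i ^+ 2 * F j ^+ 2 - 2 * ((F i * G i) * (F j * G j)))).
    by apply: eq_bigr => i _; apply: eq_bigr => j _; ring.
  have expand (f g : I -> R) : \sum_(i | P i) \sum_(j | P j) f i * g j =
      (\sum_(i | P i) f i) * (\sum_(j | P j) g j) by rewrite big_distrlr.
  rewrite (eq_bigr (fun i => \sum_(j | P j) (F i ^+ 2 * G j ^+ 2)
      + \sum_(j | P j) (G i ^+ 2 * F j ^+ 2)
      - 2 * \sum_(j | P j) (F i * G i) * (F j * G j))); last first.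
    by move=> i _; rewrite sumrB big_split mulr_sumr.
  rewrite sumrB big_split /= -mulr_sumr !expand -/A -/B -/C; ring.
have : 0 <= 2 * (A * B - C ^+ 2).
  by rewrite -lagrange; do 2!(apply: sumr_ge0 => ? _); exact: sqr_ge0.
by rewrite pmulr_rge0 // subr_ge0.
Qed.

Lemma sum_sqrtM_le (R : rcfType) (I : finType) (f g : I -> R) :
  (forall i, 0 <= f i) -> (forall i, 0 <= g i) ->
  \sum_i Num.sqrt (f i * g i) <= Num.sqrt (\sum_i f i) * Num.sqrt (\sum_i g i).
Proof.
move=> f0 g0; rewrite -sqrtrM ?sumr_ge0 //.
have sq (h : I -> R) : (forall i, 0 <= h i) -> \sum_i h i = \sum_i Num.sqrt (h i) ^+ 2.
  by move=> h0; apply: eq_bigr => i _; rewrite sqr_sqrtr.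
under eq_bigr do rewrite sqrtrM //.
rewrite (sq f) // (sq g) // -[leLHS]ger0_norm; last first.
  by apply: sumr_ge0 => i _; rewrite mulr_ge0 ?sqrtr_ge0.
rewrite -sqrtr_sqr ler_sqrt ?mulr_ge0 ?sumr_ge0 // => [|i _|i _]; try exact: sqr_ge0.
exact: (cauchy_schwarz_sum xpredT (fun i => Num.sqrt (f i)) (fun i => Num.sqrt (g i))).
Qed.

Lemma ge0_from_right (R : realFieldType) (a b : R) :
  0 <= b -> (forall s, 0 < s <= 1 -> 0 <= a + s * b) -> 0 <= a.
Proof.
move=> b0 near0; rewrite leNgt; apply/negP => a0.
have ba : 0 < b - a by lra.
pose s := - a / (b - a).
have s_gt0 : 0 < s by rewrite divr_gt0 ?oppr_gt0.
have s_le1 : s <= 1 by rewrite ler_pdivrMr // mul1r; lra.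
have : (a + s * b) * (b - a) = - a ^+ 2 by rewrite /s; field; rewrite gt_eqF.
have : 0 <= a + s * b by apply: near0; rewrite s_gt0 s_le1.
nra.
Qed.

Lemma sqr_max0_le (R : realDomainType) (y z : R) : y <= z -> Num.max 0 y ^+ 2 <= z ^+ 2.
Proof.
move=> yz; have [y0|y_gt0] := leP y 0; first by rewrite expr0n sqr_ge0.
by rewrite ler_sqr ?nnegrE ?(ltW y_gt0) ?(le_trans (ltW y_gt0)).
Qed.

Lemma sum_sqr_sub_le (R : realDomainType) (I : finType) (P : pred I) (p r m W : R)
    (q : I -> R) :
  0 <= r -> 0 <= W -> p ^+ 2 <= r * W -> #|P|%:R <= m ->
  \sum_(i | P i) (p - q i) ^+ 2 <= (1 + r * m) * (W + \sum_i q i ^+ 2).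
Proof.
move=> r0 W0 pW Pm.
set k : R := #|P|%:R; set B := \sum_(i | P i) q i.
set Q' := \sum_(i | P i) q i ^+ 2; set Q := \sum_i q i ^+ 2.
have expand : \sum_(i | P i) (p - q i) ^+ 2 = k * p ^+ 2 - 2 * p * B + Q'.
  rewrite (eq_bigr (fun i => p ^+ 2 - 2 * p * q i + q i ^+ 2)) => [|i _]; last by ring.
  by rewrite big_split sumrB /= -[\sum_(i | P i) 2 * p * q i]mulr_sumr sumr_const
    [k * _]mulr_natl.
have k0 : 0 <= k := ler0n _ _.
have m0 : 0 <= m := le_trans k0 Pm.
have BQ' : B ^+ 2 <= k * Q'.
  have := cauchy_schwarz_sum P (fun=> 1) q.
  by rewrite (eq_bigr _ (fun i _ => mul1r (q i))) sumr_const expr1n mulr_natl.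
have Q'Q : Q' <= Q.
  by rewrite /Q (bigID P) /= lerDl sumr_ge0 // => i _; exact: sqr_ge0.
have Q'0 : 0 <= Q' by apply: sumr_ge0 => i _; exact: sqr_ge0.
(* AM-GM: [4 p^2 B^2 <= 4 W (r m Q) <= (W + r m Q)^2] *)
have cross : `|2 * p * B| <= W + r * m * Q.
  have pB : p ^+ 2 * B ^+ 2 <= (r * W) * (m * Q).
    by apply: ler_pM; rewrite ?sqr_ge0 //; apply: le_trans BQ' _; apply: ler_pM.
  rewrite -ler_sqr ?nnegrE ?normr_ge0 ?addr_ge0 ?mulr_ge0 ?(le_trans Q'0 Q'Q) //.
  by rewrite real_normK ?num_real; have := sqr_ge0 (W - r * m * Q); nra.
have kp : k * p ^+ 2 <= m * (r * W) by apply: ler_pM; rewrite ?sqr_ge0.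
by move: cross; rewrite expand ler_norml => /andP[cross _]; nra.
Qed.

Lemma sum_le_of_descent (R : rcfType) (T : nat) (S L V : nat -> R) :
  (forall t, 0 <= S t) -> (forall t, 0 <= L t) -> (forall t, 0 <= V t) ->
  (forall t, (t < T)%N -> S t - 2 * Num.sqrt (S t * L t) <= V t - V t.+1) ->
  \sum_(t < T) S t <= (Num.sqrt (V 0%N) + 2 * Num.sqrt (\sum_(t < T) L t)) ^+ 2.
Proof.
move=> S0 L0 V0 descent.
have telescoped :
    \sum_(t < T) S t - 2 * \sum_(t < T) Num.sqrt (S t * L t) <= V 0%N - V T.
  rewrite mulr_sumr -sumrB -opprB -(telescope_sumr _ (leq0n T)) big_mkord -sumrN.
  by apply: ler_sum => t _; rewrite opprB descent.
have cs := @sum_sqrtM_le _ 'I_T (fun t => S t) (fun t => L t)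
  (fun t => S0 t) (fun t => L0 t).
set s := Num.sqrt (\sum_(t < T) S t) in cs *.
set l := Num.sqrt (\sum_(t < T) L t) in cs *.
have s0 : 0 <= s := sqrtr_ge0 _.
have l0 : 0 <= l := sqrtr_ge0 _.
have n0 : 0 <= Num.sqrt (V 0%N) := sqrtr_ge0 _.
have sE : \sum_(t < T) S t = s ^+ 2 by rewrite sqr_sqrtr ?sumr_ge0.
have nE : V 0%N = Num.sqrt (V 0%N) ^+ 2 by rewrite sqr_sqrtr.
rewrite sE ler_sqr ?nnegrE ?addr_ge0 ?mulr_ge0 //.
have : s ^+ 2 - 2 * s * l <= Num.sqrt (V 0%N) ^+ 2.
  by move: telescoped (V0 T); rewrite sE -nE; lra.
nra.
Qed.

Section Vectors.
Variables (R : realType) (n : nat).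
Implicit Types (a b c : 'rV[R]_n) (s : R).

Lemma dotvC a b : dotv a b = dotv b a.
Proof. by apply: eq_bigr => j _; rewrite mulrC. Qed.

Lemma dotvDl a b c : dotv (a + b) c = dotv a c + dotv b c.
Proof. by rewrite /dotv -big_split; apply: eq_bigr => j _; rewrite mxE mulrDl. Qed.

Lemma dotvNl a b : dotv (- a) b = - dotv a b.
Proof. by rewrite /dotv -sumrN; apply: eq_bigr => j _; rewrite mxE mulNr. Qed.

Lemma dotvBl a b c : dotv (a - b) c = dotv a c - dotv b c.
Proof. by rewrite dotvDl dotvNl. Qed.

Lemma dotvZl s a b : dotv (s *: a) b = s * dotv a b.
Proof. by rewrite /dotv mulr_sumr; apply: eq_bigr => j _; rewrite mxE mulrA. Qed.

Lemma dotvDr a b c : dotv a (b + c) = dotv a b + dotv a c.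
Proof. by rewrite dotvC dotvDl !(dotvC a). Qed.

Lemma dotvZr s a b : dotv a (s *: b) = s * dotv a b.
Proof. by rewrite dotvC dotvZl dotvC. Qed.

Lemma sqnorm_ge0 a : 0 <= sqnorm a.
Proof. by apply: sumr_ge0 => j _; rewrite -expr2 sqr_ge0. Qed.

Lemma sqnorm0 : sqnorm (0 : 'rV[R]_n) = 0.
Proof. by rewrite /sqnorm /dotv big1 // => j _; rewrite mxE mul0r. Qed.

Lemma sqnormN a : sqnorm (- a) = sqnorm a.
Proof. by rewrite /sqnorm dotvNl dotvC dotvNl opprK. Qed.

Lemma sqnormZ s a : sqnorm (s *: a) = s ^+ 2 * sqnorm a.
Proof. by rewrite /sqnorm dotvZl dotvZr mulrA -expr2. Qed.

Lemma sqnormD a b : sqnorm (a + b) = sqnorm a + 2 * dotv a b + sqnorm b.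
Proof. rewrite /sqnorm dotvDl !dotvDr (dotvC b a); ring. Qed.

Lemma dotv_cauchy_schwarz a b : dotv a b ^+ 2 <= sqnorm a * sqnorm b.
Proof.
have sqE c : sqnorm c = \sum_j c 0 j ^+ 2 by apply: eq_bigr => j _; rewrite expr2.
by rewrite !sqE; exact: (cauchy_schwarz_sum xpredT (fun j => a 0 j) (fun j => b 0 j)).
Qed.

Lemma subr_sqnormB a b c :
  sqnorm (a - c) - sqnorm (b - c) = sqnorm (b - a) + 2 * dotv (b - a) (c - b).
Proof.
rewrite /sqnorm /dotv -sumrB mulr_sumr -big_split.
by apply: eq_bigr => j _ /=; rewrite !mxE; ring.
Qed.

Lemma convex_min_dot_ge0 (C : 'rV[R]_n -> Prop) (z p : 'rV[R]_n) :
  (forall v1 v2 s, C v1 -> C v2 -> 0 < s <= 1 -> C (v1 + s *: (v2 - v1))) ->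
  C p -> (forall v, C v -> sqnorm (p - z) <= sqnorm (v - z)) ->
  forall v, C v -> 0 <= dotv (p - z) (v - p).
Proof.
move=> convexC Cp p_min v Cv.
rewrite -(pmulr_rge0 _ (ltr0Sn _ 1)).
apply: (ge0_from_right (sqnorm_ge0 (v - p))) => s /andP[s_gt0 s_le1].
have := p_min _ (convexC _ _ s Cp Cv _); rewrite s_gt0 s_le1 => /(_ isT).
rewrite addrAC [sqnorm (_ + _ *: _)]sqnormD sqnormZ dotvZr -subr_ge0.
have -> : sqnorm (p - z) + 2 * (s * dotv (p - z) (v - p)) + s ^+ 2 * sqnorm (v - p) -
    sqnorm (p - z) = s * (2 * dotv (p - z) (v - p) + s * sqnorm (v - p)) by ring.
by rewrite pmulr_rge0.
Qed.

Lemma sqnormB_decrease_ge (a b c c' : 'rV[R]_n) :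
  0 <= dotv (b - a) (c' - b) ->
  sqnorm (b - a) - 2 * Num.sqrt (sqnorm (b - a) * sqnorm (c - c'))
  <= sqnorm (a - c) - sqnorm (b - c).
Proof.
move=> obtuse; rewrite subr_sqnormB.
have -> : c - b = (c' - b) + (c - c') by rewrite [RHS]addrC addrA subrK.
have cs : - dotv (b - a) (c - c') <= Num.sqrt (sqnorm (b - a) * sqnorm (c - c')).
  apply: le_trans (ler_norm _) _.
  by rewrite normrN -sqrtr_sqr ler_sqrt ?mulr_ge0 ?sqnorm_ge0 // dotv_cauchy_schwarz.
rewrite dotvDr; lra.
Qed.

End Vectors.

Lemma sqnorm_row_mx (R : realType) m n (a : 'rV[R]_m) (b : 'rV[R]_n) :
  sqnorm (row_mx a b) = sqnorm a + sqnorm b.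
Proof.
rewrite /sqnorm /dotv big_split_ord /=.
by congr (_ + _); apply: eq_bigr => j _; rewrite (row_mxEl, row_mxEr).
Qed.

Lemma sqnorm_row_mxB (R : realType) m n (a a' : 'rV[R]_m) (b b' : 'rV[R]_n) :
  sqnorm (row_mx a b - row_mx a' b') = sqnorm (a - a') + sqnorm (b - b').
Proof. by rewrite opp_row_mx add_row_mx sqnorm_row_mx. Qed.

Definition active (yl yr i : nat) : bool := ((i.+1 < yl) || (yr <= i.+1))%N.

Lemma card_active n yl yr : (yl <= yr)%N ->
  #|[pred i : 'I_n | active yl yr i]| = (minn yl.-1 n + (n - yr.-1))%N.
Proof.
move=> lr; rewrite -sum1_card big_mkcond /=.
elim: n => [|n IH]; first by rewrite big_ord0 minn0 sub0n.
rewrite big_ord_recr IH inE /active /=.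
by case: (ltnP n.+1 yl) => ?; case: (leqP yr n.+1) => ? /=; lia.
Qed.

Section PassiveAggressive.
Variables (R : realType) (d K : nat) (x : 'rV[R]_d) (yl yr : nat).

Lemma loss_inactive (w : 'rV[R]_d) (th : 'rV[R]_(K - 1)) (i : 'I_(K - 1)) :
  ~~ active yl yr i -> loss w th x yl yr i = 0.
Proof. by rewrite /active negb_or /loss => /andP[/negbTE -> /negbTE ->]. Qed.

Lemma PA_feasible_convex (w1 w2 : 'rV[R]_d) (th1 th2 : 'rV[R]_(K - 1)) (s : R) :
  PA_feasible x yl yr w1 th1 -> PA_feasible x yl yr w2 th2 -> 0 <= s <= 1 ->
  PA_feasible x yl yr (w1 + s *: (w2 - w1)) (th1 + s *: (th2 - th1)).
Proof.
move=> F1 F2 /andP[s0 s1] i; rewrite dotvDl dotvZl dotvBl !mxE.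
have [l1 r1] := F1 i; have [l2 r2] := F2 i.
by split=> h; [move: (l1 h) (l2 h) | move: (r1 h) (r2 h)]; nra.
Qed.

(* The PA update is the projection onto this set, in the space of the
   concatenated parameters [row_mx w th]. *)
Definition PA_region (z : 'rV[R]_(d + (K - 1))) : Prop :=
  PA_feasible x yl yr (lsubmx z) (rsubmx z).

Lemma PA_update_dot_ge0 (wt w' w : 'rV[R]_d) (tht th' th : 'rV[R]_(K - 1)) :
  PA_update x yl yr wt tht w' th' -> PA_feasible x yl yr w th ->
  0 <= dotv (row_mx w' th' - row_mx wt tht) (row_mx w th - row_mx w' th').
Proof.
move=> [F' opt] F; apply: (@convex_min_dot_ge0 _ _ PA_region).
- move=> v1 v2 s C1 C2 /andP[s0 s1].
  rewrite /PA_region -[v1]hsubmxK -[v2]hsubmxK opp_row_mx add_row_mx.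
  rewrite scale_row_mx add_row_mx row_mxKl row_mxKr.
  by apply: PA_feasible_convex => //; rewrite ltW.
- by rewrite /PA_region row_mxKl row_mxKr.
- move=> v Cv; rewrite -[v]hsubmxK !sqnorm_row_mxB.
  by have := opt _ _ Cv; rewrite /PA_objective -!mulrDr ler_pM2l ?invr_gt0 ?ltr0n.
- by rewrite /PA_region row_mxKl row_mxKr.
Qed.

Definition signed_loss (u : 'rV[R]_d) (b : 'rV[R]_(K - 1)) : 'rV[R]_(K - 1) :=
  \row_i (if (i.+1 < yl)%N then loss u b x yl yr i else - loss u b x yl yr i).

Lemma sqnorm_signed_loss u b :
  sqnorm (signed_loss u b) = \sum_i loss u b x yl yr i ^+ 2.
Proof. by apply: eq_bigr => i _; rewrite mxE; case: ifP; rewrite ?mulrNN expr2. Qed.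

Lemma PA_feasible_signed_loss u b : (yl <= yr)%N ->
  PA_feasible x yl yr u (b - signed_loss u b).
Proof.
have le_max0 (y : R) : y <= Num.max 0 y by rewrite le_max lexx orbT.
move=> lr i; rewrite !mxE /loss; split=> [left|right].
  by rewrite left; have := le_max0 (1 + b 0 i - dotv u x); lra.
have -> : (i.+1 < yl)%N = false by apply/negbTE; rewrite -leqNgt; lia.
by rewrite right; have := le_max0 (1 + dotv u x - b 0 i); lra.
Qed.

Lemma PA_update_progress (wt w' u : 'rV[R]_d) (tht th' b : 'rV[R]_(K - 1)) :
  PA_update x yl yr wt tht w' th' -> (yl <= yr)%N ->
  let step := sqnorm (row_mx w' th' - row_mx wt tht) in
  step - 2 * Num.sqrt (step * \sum_i loss u b x yl yr i ^+ 2)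
  <= sqnorm (row_mx wt tht - row_mx u b) - sqnorm (row_mx w' th' - row_mx u b).
Proof.
move=> upd lr /=.
have -> : \sum_i loss u b x yl yr i ^+ 2 =
    sqnorm (row_mx u b - row_mx u (b - signed_loss u b)).
  by rewrite sqnorm_row_mxB subrr subKr sqnorm0 add0r sqnorm_signed_loss.
apply: sqnormB_decrease_ge; apply: PA_update_dot_ge0 upd _.
exact: PA_feasible_signed_loss.
Qed.

Lemma sum_loss_sqr_le_active (wt w' : 'rV[R]_d) (tht th' : 'rV[R]_(K - 1)) :
  PA_feasible x yl yr w' th' ->
  \sum_i loss wt tht x yl yr i ^+ 2
  <= \sum_(i : 'I_(K - 1) | active yl yr i) (dotv (w' - wt) x - (th' - tht) 0 i) ^+ 2.
Proof.
move=> F'; rewrite (bigID (fun i : 'I_(K - 1) => active yl yr i)) /=.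
rewrite [X in _ + X]big1 => [|i /loss_inactive ->]; last by rewrite expr0n.
rewrite addr0; apply: ler_sum => i _; rewrite dotvBl !mxE /loss.
have [left right] := F' i.
case: ifP => [/left h|_]; first by apply: sqr_max0_le; lra.
case: ifP => [/right h|_]; last by rewrite expr0n sqr_ge0.
by rewrite -[X in _ <= X]sqrrN; apply: sqr_max0_le; lra.
Qed.

Lemma sum_loss_sqr_le_step (wt w' : 'rV[R]_d) (tht th' : 'rV[R]_(K - 1)) (r m : R) :
  PA_feasible x yl yr w' th' -> (1 <= yl)%N -> (yl <= yr)%N -> (yr <= K)%N ->
  sqnorm x <= r -> ((K - 1 - (yr - yl))%N)%:R <= m ->
  \sum_i loss wt tht x yl yr i ^+ 2
  <= (1 + r * m) * sqnorm (row_mx w' th' - row_mx wt tht).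
Proof.
move=> F' yl1 lr yrK xr Km; apply: le_trans (sum_loss_sqr_le_active _ _ F') _.
have r0 : 0 <= r := le_trans (sqnorm_ge0 x) xr.
rewrite sqnorm_row_mxB.
have -> : sqnorm (th' - tht) = \sum_i ((th' - tht) 0 i) ^+ 2.
  by apply: eq_bigr => i _; rewrite expr2.
apply: sum_sqr_sub_le => //; first exact: sqnorm_ge0.
  apply: le_trans (dotv_cauchy_schwarz _ _) _.
  by rewrite mulrC ler_wpM2r ?sqnorm_ge0.
by apply: le_trans Km; rewrite card_active // ler_nat; lia.
Qed.

End PassiveAggressive.

Lemma PA_sum_steps_le (R : realType) (d K T : nat)
    (x : nat -> 'rV[R]_d) (yl yr : nat -> nat)
    (w : nat -> 'rV[R]_d) (th : nat -> 'rV[R]_(K - 1))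
    (u : 'rV[R]_d) (b : 'rV[R]_(K - 1)) :
  (forall t, (t < T)%N -> (yl t <= yr t)%N) ->
  (forall t, (t < T)%N ->
     PA_update (x t) (yl t) (yr t) (w t) (th t) (w t.+1) (th t.+1)) ->
  \sum_(t < T) sqnorm (row_mx (w t.+1) (th t.+1) - row_mx (w t) (th t))
  <= (Num.sqrt (sqnorm (row_mx (w 0%N) (th 0%N) - row_mx u b))
      + 2 * Num.sqrt (\sum_(t < T) \sum_i loss u b (x t) (yl t) (yr t) i ^+ 2)) ^+ 2.
Proof.
move=> lr upd.
apply: (sum_le_of_descent
  (S := fun t => sqnorm (row_mx (w t.+1) (th t.+1) - row_mx (w t) (th t)))
  (L := fun t => \sum_i loss u b (x t) (yl t) (yr t) i ^+ 2)
  (V := fun t => sqnorm (row_mx (w t) (th t) - row_mx u b))) => [t|t|t|t Tt].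
- exact: sqnorm_ge0.
- by apply: sumr_ge0 => i _; exact: sqr_ge0.
- exact: sqnorm_ge0.
- exact: PA_update_progress (upd t Tt) (lr t Tt).
Qed.

Theorem theorem4 (R : realType) (d K T : nat)
    (x : nat -> 'rV[R]_d) (yl yr : nat -> nat)
    (w : nat -> 'rV[R]_d) (th : nat -> 'rV[R]_(K - 1))
    (u : 'rV[R]_d) (b : 'rV[R]_(K - 1)) :
  (forall t, (t < T)%N -> (1 <= yl t)%N /\ (yl t <= yr t)%N /\ (yr t <= K)%N) ->
  w 0%N = 0 -> th 0%N = 0 ->
  (forall t, (t < T)%N ->
     PA_update (x t) (yl t) (yr t) (w t) (th t) (w t.+1) (th t.+1)) ->
  let c : nat := \big[minn/K]_(t < T) (yr t - yl t)%N in
  let R2 : R := \big[Num.max/0]_(t < T) sqnorm (x t) in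
  let D : R := 1 + R2 * ((K - c - 1)%N)%:R in
  let normv : R := Num.sqrt (sqnorm u + sqnorm b) in
  \sum_(t < T) \sum_(i < K - 1) (loss (w t) (th t) (x t) (yl t) (yr t) i) ^+ 2
  <= D ^+ 2 * (normv + 4 * ((K - c - 1)%N)%:R *
       Num.sqrt (\sum_(t < T) \sum_(i < K - 1) (loss u b (x t) (yl t) (yr t) i) ^+ 2)) ^+ 2.
Proof.
move=> labels w0 th0 upd; cbv zeta.
set c := \big[minn/K]_(t < T) _; set R2 := \big[Num.max/0]_(t < T) _.
set m : R := (K - c - 1)%N%:R; set D := 1 + R2 * m.
set normv := Num.sqrt _; set l := Num.sqrt _.
have c_le (t : 'I_T) : (c <= yr t - yl t)%N := bigmin_le K t (fun t : 'I_T => yr t - yl t)%N.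
have [m0|m_gt0] := posnP (K - c - 1).
  rewrite big1 => [|t _]; first by rewrite mulr_ge0 // sqr_ge0.
  rewrite big1 // => i _; rewrite loss_inactive ?expr0n // /active.
  have [? [? ?]] := labels t (ltn_ord t); have := c_le t; have := ltn_ord i; lia.
have m1 : 1 <= m by rewrite ler1n.
have D1 : 1 <= D by rewrite lerDl mulr_ge0 //; exact: bigmax_ge_id.
have loss_step (t : 'I_T) :
    \sum_(i < K - 1) loss (w t) (th t) (x t) (yl t) (yr t) i ^+ 2
    <= D * sqnorm (row_mx (w t.+1) (th t.+1) - row_mx (w t) (th t)).
  have [? [? ?]] := labels t (ltn_ord t); have [F' _] := upd t (ltn_ord t).
  apply: sum_loss_sqr_le_step => //; first exact: (le_bigmax 0 (fun t : 'I_T => sqnorm (x t))).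
  by rewrite ler_nat; have := c_le t; lia.
have steps := PA_sum_steps_le u b (fun t Tt => (labels t Tt).2.1) upd.
rewrite w0 th0 sqnorm_row_mxB !sub0r !sqnormN -/normv -/l in steps.
apply: le_trans (ler_sum _ (fun t _ => loss_step t)) _.
rewrite -mulr_sumr expr2 -mulrA ler_pM2l ?(lt_le_trans ltr01) //.
have grow : (normv + 2 * l) ^+ 2 <= (normv + 4 * m * l) ^+ 2.
  rewrite ler_sqr ?nnegrE ?addr_ge0 ?mulr_ge0 ?sqrtr_ge0 ?(le_trans ler01 m1) //.
  by rewrite lerD2l ler_wpM2r ?sqrtr_ge0 //; lra.
by apply: le_trans steps (le_trans grow _); rewrite ler_peMl ?sqr_ge0.
Qed.
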